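(* Let $f:\mathbb N\to\mathbb N$ be a function, let $(G,d_G)$ be a countable group with a proper left invariant metric which is of growth type at most $f$, and let $(H,d_H)$ be another countable group with a proper left invariant metric. Then: (1) every subset $A\subseteq G$ (with the restricted metric) is of growth type at most $f$; (2) if there is a coarse embedding $H\to G$, then $H$ is of growth type at most $f$; (3) if $G$ is finitely generated, then $G$ has classical growth at most $f$; moreover, the growth type of $G$ exists and coincides with its classical growth.
   Context: A proper left invariant metric is $d(g,h)=\|g^{-1}h\|$ for a proper norm ($\|g\|=0$ iff $g=1$, $\|g\|=\|g^{-1}\|$, subadditive, finite balls). An $s$-scale chain of length $m$ from $x$ to $y$ is $x=x_0,\dots,x_m=y$ with $d(x_i,x_{i+1})<s$. For a metric space $X$, $g\in X$, $s>0$, $n\in\mathbb N$, $A_g^{(n,s)}$ is the set of $h\in X$ joined to $g$ by an $s$-scale chain in $X$ of length $n$, and $gr_{(s,g)}(n)=\#A_g^{(n,s)}$. $u\preceq v$ means there is $C>0$ with $u(x)\le Cv(Cx)$ for large $x$; $u,v$ have the same type if $u\preceq v\preceq u$. $X$ is of growth type at most $f$ if $gr_{(s,g)}\preceq f$ for all $g,s$; its growth type is $f$ if moreover $f\preceq gr_{(s,g)}$ for some $g,s$. For a finitely generated group with a word metric, its classical growth is the type of $n\mapsto\#B(1,n)$. A coarse embedding is a map that is a coarse equivalence onto its image, where $f$ is coarse if for every $\delta>0$ there is $\epsilon>0$ with $d(x,y)\le\delta\Rightarrow d(f(x),f(y))\le\epsilon$. *)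

From Stdlib Require Import Reals List Arith.
Import ListNotations.
Open Scope R_scope.
Set Implicit Arguments.

Record Group := {
  gcar :> Type;
  gmul : gcar -> gcar -> gcar;
  ginv : gcar -> gcar;
  gone : gcar;
  gmulA : forall x y z, gmul x (gmul y z) = gmul (gmul x y) z;
  gmul1l : forall x, gmul gone x = x;
  gmulVl : forall x, gmul (ginv x) x = gone }.

Definition countable (X : Type) : Prop :=
  exists e : X -> nat, forall x y, e x = e y -> x = y.

Definition finite_set {X : Type} (P : X -> Prop) : Prop :=
  exists l : list X, forall x, P x -> In x l.

Definition is_proper_norm (G : Group) (N : G -> R) : Prop :=
  (forall g, N g = 0 <-> g = gone G) /\
  (forall g, N (ginv G g) = N g) /\
  (forall g h, N (gmul G g h) <= N g + N h) /\
  (forall r, finite_set (fun g => N g <= r)).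

Definition proper_left_inv_metric (G : Group) (d : G -> G -> R) : Prop :=
  exists N, is_proper_norm G N /\ forall g h, d g h = N (gmul G (ginv G g) h).

Definition chain {X : Type} (d : X -> X -> R) (s : R) (n : nat) (x y : X) : Prop :=
  exists c : nat -> X, c 0%nat = x /\ c n = y /\
    forall i, (i < n)%nat -> d (c i) (c (S i)) < s.

Definition Aset {X : Type} (d : X -> X -> R) (g : X) (s : R) (n : nat) : X -> Prop :=
  fun h => chain d s n g h.

Definition card_le {X : Type} (P : X -> Prop) (m : nat) : Prop :=
  exists l : list X, (length l <= m)%nat /\ forall x, P x -> In x l.

Definition gr_preceq {X : Type} (d : X -> X -> R) (g : X) (s : R) (f : nat -> nat) : Prop :=
  exists C : nat, (1 <= C)%nat /\ exists N : nat, forall n, (N <= n)%nat ->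
    card_le (Aset d g s n) (C * f (C * n))%nat.

Definition preceq_gr {X : Type} (f : nat -> nat) (d : X -> X -> R) (g : X) (s : R) : Prop :=
  exists C : nat, (1 <= C)%nat /\ exists N : nat, forall n, (N <= n)%nat ->
    exists l : list X, NoDup l /\ (forall x, In x l -> Aset d g s (C * n)%nat x) /\
      (f n <= C * length l)%nat.

Definition fun_preceq (u v : nat -> nat) : Prop :=
  exists C : nat, (1 <= C)%nat /\ exists N : nat, forall x, (N <= x)%nat ->
    (u x <= C * v (C * x))%nat.

Definition growth_at_most {X : Type} (d : X -> X -> R) (f : nat -> nat) : Prop :=
  forall (g : X) (s : R), 0 < s -> gr_preceq d g s f.

Definition growth_type {X : Type} (d : X -> X -> R) (f : nat -> nat) : Prop :=
  growth_at_most d f /\ exists (g : X) (s : R), 0 < s /\ preceq_gr f d g s.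

Definition sub_dist {X : Type} (d : X -> X -> R) (A : X -> Prop) :
  {x : X | A x} -> {x : X | A x} -> R :=
  fun a b => d (proj1_sig a) (proj1_sig b).

Definition coarse_map {X Y : Type} (dX : X -> X -> R) (dY : Y -> Y -> R) (f : X -> Y) : Prop :=
  forall delta, 0 < delta -> exists eps, 0 < eps /\
    forall x y, dX x y <= delta -> dY (f x) (f y) <= eps.

Definition close {X Y : Type} (dY : Y -> Y -> R) (f g : X -> Y) : Prop :=
  exists K, forall x, dY (f x) (g x) <= K.

Definition coarse_equiv {X Y : Type} (dX : X -> X -> R) (dY : Y -> Y -> R) (f : X -> Y) : Prop :=
  coarse_map dX dY f /\ exists g : Y -> X, coarse_map dY dX g /\
    close dX (fun x => g (f x)) (fun x => x) /\ close dY (fun y => f (g y)) (fun y => y).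

Definition image {X Y : Type} (f : X -> Y) : Y -> Prop := fun y => exists x, f x = y.

Definition coarse_embedding {X Y : Type} (dX : X -> X -> R) (dY : Y -> Y -> R) (f : X -> Y) : Prop :=
  coarse_equiv dX (sub_dist dY (image f))
    (fun x => exist (image f) (f x) (ex_intro _ x eq_refl)).

Definition is_letter (G : Group) (S : list G) (x : G) : Prop :=
  In x S \/ In (ginv G x) S.

Definition word_prod (G : Group) (l : list G) : G := fold_right (gmul G) (gone G) l.

Definition word_len_le (G : Group) (S : list G) (x : G) (n : nat) : Prop :=
  exists l : list G, (length l <= n)%nat /\ Forall (is_letter G S) l /\ word_prod G l = x.

Definition generates (G : Group) (S : list G) : Prop :=
  forall x : G, exists n, word_len_le G S x n.

Definition ball_count (G : Group) (S : list G) (beta : nat -> nat) : Prop :=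
  forall n, exists l : list G, NoDup l /\ length l = beta n /\
    forall x, In x l <-> word_len_le G S x n.

(* A chain in a subset is a chain in the ambient space, so subsets inherit
   every growth bound.  A coarse embedding [phi : H -> G] carries s-chains of
   [H] to t-chains of [G], and its coarse inverse recovers every point of [H]
   up to a fixed distance [K]; as K-balls of a proper left invariant metric are
   uniformly finite, [#A_h^(n,s)] is at most a constant times [#A_(phi h)^(n,t)].
   For a finitely generated [G], words of length [n] are [n]-step chains at any
   scale exceeding the norms of the generators, while a chain step of size
   [< s] is a word of length at most [K], where [K] bounds the word length on
   the finite s-ball; so balls of the word metric and the sets [A_g^(n,s)]
   bound each other with linear distortion. *)

From Stdlib Require Import Reals List.
From Stdlib Require Import Lia Lra Classical ProofIrrelevance.
Import ListNotations.
Open Scope R_scope.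

Lemma gmulV (G : Group) (x : G) : gmul G x (ginv G x) = gone G.
Proof.
  pose proof (gmulA G (ginv G (ginv G x)) (ginv G x) (gmul G x (ginv G x))) as E.
  rewrite gmulVl, gmul1l, (gmulA G (ginv G x) x), gmulVl, gmul1l, gmulVl in E.
  now symmetry.
Qed.

Lemma gmul1r (G : Group) (x : G) : gmul G x (gone G) = x.
Proof. now rewrite <- (gmulVl G x), gmulA, gmulV, gmul1l. Qed.

Lemma gmulKV (G : Group) (x y : G) : gmul G x (gmul G (ginv G x) y) = y.
Proof. now rewrite gmulA, gmulV, gmul1l. Qed.

Lemma gmulK (G : Group) (x y : G) : gmul G (ginv G x) (gmul G x y) = y.
Proof. now rewrite gmulA, gmulVl, gmul1l. Qed.

Section CardLe.
Context {X Y : Type}.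

Lemma card_le_mono (P Q : X -> Prop) m m' :
  (forall x, P x -> Q x) -> (m <= m')%nat -> card_le Q m -> card_le P m'.
Proof.
  intros PQ mm' [l [Hl HQ]]. exists l. split; [lia|]. auto.
Qed.

Lemma card_le_NoDup {P : X -> Prop} {m l} :
  card_le P m -> NoDup l -> (forall x, In x l -> P x) -> (length l <= m)%nat.
Proof.
  intros [l' [Hl' HP]] Hnd Hl.
  apply Nat.le_trans with (length l'); [|exact Hl'].
  apply NoDup_incl_length; [exact Hnd|]. intros x Hx. auto.
Qed.

Lemma card_le_image {Q : X -> Prop} (e : X -> Y) {m} :
  card_le Q m -> card_le (fun y => exists x, Q x /\ e x = y) m.
Proof.
  intros [l [Hl HQ]]. exists (map e l). rewrite length_map. split; [exact Hl|].
  intros y [x [Qx <-]]. apply in_map. auto.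
Qed.

Lemma card_le_preimage_inj {Q : Y -> Prop} (e : X -> Y) {m} :
  (forall x x', e x = e x' -> x = x') ->
  card_le Q m -> card_le (fun x => Q (e x)) m.
Proof.
  intros e_inj [l [Hl HQ]].
  assert (Hpre : exists l', (length l' <= length l)%nat /\
                   forall x, In (e x) l -> In x l').
  { clear Hl HQ. induction l as [|y l [l' [Hl' Hin]]].
    - exists []. split; [simpl; lia|]. intros x [].
    - destruct (classic (exists x, e x = y)) as [[x0 Ex0]|Hy].
      + exists (x0 :: l'). split; [simpl; lia|].
        intros x [Ex|Hx]; [left; apply e_inj; congruence|right; auto].
      + exists l'. split; [simpl; lia|].
        intros x [Ex|Hx]; [exfalso; eauto|auto]. }
  destruct Hpre as [l' [Hl' Hin]]. exists l'. split; [lia|]. auto.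
Qed.

Lemma card_le_cover {P : X -> Prop} {Q : Y -> Prop} {R : Y -> X -> Prop} {m k} :
  card_le Q m -> (forall y, card_le (R y) k) ->
  (forall x, P x -> exists y, Q y /\ R y x) -> card_le P (m * k).
Proof.
  intros [l [Hl HQ]] HR Hcov.
  assert (Hunion : card_le (fun x => exists y, In y l /\ R y x) (length l * k)).
  { clear Hl HQ. induction l as [|y l [L [HL HinL]]].
    - exists []. split; [simpl; lia|]. intros x [y [[] _]].
    - destruct (HR y) as [Ly [HLy Hy]]. exists (Ly ++ L).
      rewrite length_app. split; [simpl; lia|].
      intros x [y' [[<-|Hy'] Rx]]; apply in_or_app; [left|right]; eauto. }
  apply card_le_mono with (2 := Nat.mul_le_mono_r _ _ k Hl) (3 := Hunion).
  intros x Px. destruct (Hcov x Px) as [y [Qy Ry]]. eauto.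
Qed.

End CardLe.

Lemma chain_map {X Y : Type} (dX : X -> X -> R) (dY : Y -> Y -> R) (e : X -> Y) s t n x y :
  (forall x x', dX x x' < s -> dY (e x) (e x') < t) ->
  chain dX s n x y -> chain dY t n (e x) (e y).
Proof.
  intros He [c [c0 [cn Hc]]]. exists (fun i => e (c i)).
  repeat split; [now rewrite c0|now rewrite cn|]. intros i Hi. auto.
Qed.

Lemma chain_pad {X : Type} (d : X -> X -> R) s n k x y :
  (forall z, d z z < s) -> (n <= k)%nat -> chain d s n x y -> chain d s k x y.
Proof.
  intros Hz Hnk [c [c0 [cn Hc]]]. exists (fun i => c (Nat.min i n)).
  repeat split; [now rewrite Nat.min_0_l|now rewrite Nat.min_r|].
  intros i Hi. destruct (Nat.lt_ge_cases i n).
  - rewrite !Nat.min_l by lia. auto.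
  - rewrite !Nat.min_r by lia. auto.
Qed.

Lemma growth_at_most_sub_dist {X : Type} (d : X -> X -> R) (A : X -> Prop) f :
  growth_at_most d f -> growth_at_most (sub_dist d A) f.
Proof.
  intros hf a s Hs. destruct (hf (proj1_sig a) s Hs) as [C [HC [N0 HN]]].
  exists C. split; [exact HC|]. exists N0. intros n Hn.
  apply card_le_mono with (2 := le_n _)
    (3 := card_le_preimage_inj (@proj1_sig X A)
            (eq_sig_hprop (fun x => proof_irrelevance (A x))) (HN n Hn)).
  intros x Hx. apply (chain_map (sub_dist d A) d (@proj1_sig X A) s s); auto.
Qed.

Lemma proper_left_inv_metric_dist_self {G : Group} {d : G -> G -> R} :
  proper_left_inv_metric G d -> forall x, d x x = 0.
Proof. intros [N [[HN0 _] Hd]] x. rewrite Hd, gmulVl. now apply HN0. Qed.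

Lemma proper_left_inv_metric_ball {G : Group} {d : G -> G -> R} :
  proper_left_inv_metric G d ->
  forall K, exists k, forall z, card_le (fun x => d z x <= K) k.
Proof.
  intros [N [[_ [_ [_ Hfin]]] Hd]] K. destruct (Hfin K) as [T HT].
  exists (length T). intro z. exists (map (gmul G z) T).
  rewrite length_map. split; [lia|]. intros x Hx. apply in_map_iff.
  exists (gmul G (ginv G z) x). split; [apply gmulKV|]. apply HT. now rewrite <- Hd.
Qed.

Lemma growth_at_most_coarse_embedding {X : Type} {dX : X -> X -> R}
    {H : Group} {dH : H -> H -> R} {phi : H -> X} {f : nat -> nat} :
  (forall x, dX x x = 0) -> proper_left_inv_metric H dH ->
  coarse_embedding dH dX phi -> growth_at_most dX f -> growth_at_most dH f.
Proof.
  intros Hself hH [Hcoarse [psi [_ [[K Hclose] _]]]] hf h0 s Hs.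
  destruct (Hcoarse s Hs) as [eps [Heps Hce]].
  destruct (hf (phi h0) (eps + 1) ltac:(lra)) as [C [HC [N0 HN]]].
  destruct (proper_left_inv_metric_ball hH K) as [m Hball].
  exists (S m * C)%nat. split; [lia|]. exists N0. intros n Hn.
  (* Chains are padded to length [S m * n] so that the bound for [X] is taken
     at an argument proportional to [n]: [f] need not be monotone. *)
  assert (Hchain : forall x, Aset dH h0 s n x ->
                     Aset dX (phi h0) (eps + 1) (S m * n) (phi x)).
  { intros x Hx. apply chain_pad with n; [intro; rewrite Hself; lra|nia|].
    apply (chain_map dH dX phi s); [|exact Hx].
    intros y z Hyz. specialize (Hce y z (Rlt_le _ _ Hyz)). unfold sub_dist in Hce.
    simpl in Hce. lra. }
  assert (Himage := card_le_image psi (card_le_preimage_inj (@proj1_sig X (image phi))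
            (eq_sig_hprop (fun y => proof_irrelevance (image phi y)))
            (HN (S m * n)%nat ltac:(nia)))).
  apply card_le_mono with (Q := Aset dH h0 s n) (m := (C * f (C * (S m * n)) * m)%nat).
  - auto.
  - replace (S m * C * n)%nat with (C * (S m * n))%nat by ring. nia.
  - apply (card_le_cover Himage Hball).
    intros x Hx. set (y := exist (image phi) (phi x) (ex_intro _ x eq_refl)).
    exists (psi y). split; [exists y; split; [exact (Hchain x Hx)|reflexivity]|].
    apply Hclose.
Qed.

Lemma firstn_S_nth {A : Type} (l : list A) i a :
  (i < length l)%nat -> firstn (S i) l = firstn i l ++ [nth i l a].
Proof.
  revert i. induction l as [|b l IH]; intros [|i] Hi; simpl in *; try lia; [reflexivity|].
  f_equal. apply IH. lia.
Qed.

Section WordMetric.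
Context {G : Group} {gens : list G}.

Lemma word_prod_app (l1 l2 : list G) :
  word_prod G (l1 ++ l2) = gmul G (word_prod G l1) (word_prod G l2).
Proof.
  induction l1 as [|a l1 IH]; simpl; [now rewrite gmul1l|]. now rewrite IH, gmulA.
Qed.

Lemma word_len_le_mono x m n :
  (m <= n)%nat -> word_len_le G gens x m -> word_len_le G gens x n.
Proof. intros Hmn [l [Hl Hw]]. exists l. split; [lia|exact Hw]. Qed.

Lemma word_len_le_one : word_len_le G gens (gone G) 0.
Proof. exists []. repeat split; simpl; auto. Qed.

Lemma word_len_le_mul x y m n :
  word_len_le G gens x m -> word_len_le G gens y n -> word_len_le G gens (gmul G x y) (m + n).
Proof.
  intros [l1 [Hl1 [F1 <-]]] [l2 [Hl2 [F2 <-]]]. exists (l1 ++ l2).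
  rewrite length_app, word_prod_app. repeat split; [lia|]. now apply Forall_app.
Qed.

Lemma generates_word_len_bound (T : list G) :
  generates G gens -> exists K, forall t, In t T -> word_len_le G gens t K.
Proof.
  intros gen. induction T as [|a T [K HK]]; [exists 0%nat; intros t []|].
  destruct (gen a) as [k Hk]. exists (Nat.max K k).
  intros t [<-|Ht].
  - apply word_len_le_mono with k; [lia|exact Hk].
  - apply word_len_le_mono with K; [lia|auto].
Qed.

Context {N : G -> R} {d : G -> G -> R}.
Hypothesis Hd : forall g h, d g h = N (gmul G (ginv G g) h).

Lemma chain_word_len_le s K g n h :
  (forall t, N t < s -> word_len_le G gens t K) ->
  chain d s n g h -> word_len_le G gens (gmul G (ginv G g) h) (K * n).
Proof.
  intros HK [c [c0 [<- Hc]]].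
  enough (Hi : forall i, (i <= n)%nat ->
                 word_len_le G gens (gmul G (ginv G g) (c i)) (K * i)) by auto.
  induction i as [|i IH]; intros Hi.
  - rewrite c0, gmulVl, Nat.mul_0_r. apply word_len_le_one.
  - replace (gmul G (ginv G g) (c (S i)))
      with (gmul G (gmul G (ginv G g) (c i)) (gmul G (ginv G (c i)) (c (S i))))
      by now rewrite <- gmulA, gmulKV.
    replace (K * S i)%nat with (K * i + K)%nat by lia.
    apply word_len_le_mul; [apply IH; lia|]. apply HK. rewrite <- Hd. apply Hc. lia.
Qed.

Lemma word_len_le_chain s x n :
  N (gone G) = 0 -> 0 < s -> (forall a, is_letter G gens a -> N a < s) ->
  word_len_le G gens x n -> chain d s n (gone G) x.
Proof.
  intros HN1 Hs HS [l [Hl [Hf <-]]].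
  exists (fun i => word_prod G (firstn i l)).
  split; [reflexivity|split; [now rewrite firstn_all2 by lia|]].
  intros i Hi. rewrite Hd. destruct (Nat.lt_ge_cases i (length l)) as [Hil|Hil].
  - rewrite (firstn_S_nth l i (gone G) Hil), word_prod_app. simpl.
    rewrite gmul1r, gmulK. apply HS. rewrite Forall_forall in Hf. apply Hf, nth_In, Hil.
  - rewrite !firstn_all2 by lia. now rewrite gmulVl, HN1.
Qed.

End WordMetric.

Lemma letter_norm_bound {G : Group} (N : G -> R) (gens : list G) :
  (forall g, N (ginv G g) = N g) ->
  exists s, 0 < s /\ forall a, is_letter G gens a -> N a < s.
Proof.
  intros HNinv.
  assert (Hlist : exists s, 0 < s /\ forall a, In a gens -> N a < s).
  { induction gens as [|b gens [s [Hs HS]]]; [exists 1; split; [lra|intros a []]|].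
    exists (Rmax s (N b + 1)). split; [apply Rlt_le_trans with s; [lra|apply Rmax_l]|].
    intros a [->|Ha].
    - apply Rlt_le_trans with (N a + 1); [lra|apply Rmax_r].
    - apply Rlt_le_trans with s; [auto|apply Rmax_l]. }
  destruct Hlist as [s [Hs HS]]. exists s. split; [exact Hs|].
  intros a [Ha|Ha]; [auto|]. rewrite <- HNinv. auto.
Qed.

Section ProperWordMetric.
Context {G : Group} {d : G -> G -> R} {gens : list G}.
Hypothesis hd : proper_left_inv_metric G d.

Lemma word_ball_sub_Aset :
  exists s, 0 < s /\ forall x n, word_len_le G gens x n -> Aset d (gone G) s n x.
Proof.
  destruct hd as [N [[HN0 [HNinv _]] Hd]].
  destruct (letter_norm_bound N gens HNinv) as [s [Hs HS]].
  exists s. split; [exact Hs|]. intros x n Hx.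
  apply (word_len_le_chain (gens := gens) Hd); auto. now apply HN0.
Qed.

Lemma Aset_sub_word_ball s :
  generates G gens -> exists K, forall g n h,
    Aset d g s n h -> word_len_le G gens (gmul G (ginv G g) h) (K * n).
Proof.
  intros gen. destruct hd as [N [[_ [_ [_ Hfin]]] Hd]].
  destruct (Hfin s) as [T HT].
  destruct (generates_word_len_bound T gen) as [K HK].
  exists K. intros g n h. apply (chain_word_len_le Hd). intros t Ht. apply HK, HT. lra.
Qed.

Context {beta : nat -> nat}.
Hypothesis hbeta : ball_count G gens beta.

Lemma ball_count_card_le n : card_le (fun x => word_len_le G gens x n) (beta n).
Proof.
  destruct (hbeta n) as [l [_ [Hlen Hl]]]. exists l. split; [lia|]. apply Hl.
Qed.

Lemma fun_preceq_ball_count {f : nat -> nat} : growth_at_most d f -> fun_preceq beta f.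
Proof.
  intros hf. destruct word_ball_sub_Aset as [s [Hs Hball]].
  destruct (hf (gone G) s Hs) as [C [HC [N0 HN]]].
  exists C. split; [exact HC|]. exists N0. intros n Hn.
  destruct (hbeta n) as [l [Hnd [<- Hl]]].
  apply (card_le_NoDup (HN n Hn) Hnd). intros x Hx. apply Hball, Hl, Hx.
Qed.

Lemma growth_at_most_ball_count :
  generates G gens -> growth_at_most d beta.
Proof.
  intros gen g s Hs. destruct (Aset_sub_word_ball s gen) as [K HK].
  exists (S K). split; [lia|]. exists 0%nat. intros n _.
  apply card_le_mono with (2 := Nat.le_add_r _ _)
    (3 := card_le_image (gmul G g) (ball_count_card_le (S K * n))).
  intros h Hh. exists (gmul G (ginv G g) h). split; [|apply gmulKV].
  apply word_len_le_mono with (K * n)%nat; [nia|]. now apply HK.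
Qed.

Lemma growth_type_ball_count :
  generates G gens -> growth_type d beta.
Proof.
  intros gen. split; [now apply growth_at_most_ball_count|].
  destruct word_ball_sub_Aset as [s [Hs Hball]].
  exists (gone G), s. split; [exact Hs|].
  exists 1%nat. split; [lia|]. exists 0%nat. intros n _.
  destruct (hbeta n) as [l [Hnd [Hlen Hl]]].
  exists l. repeat split; [exact Hnd| |lia].
  intros x Hx. rewrite Nat.mul_1_l. apply Hball, Hl, Hx.
Qed.

End ProperWordMetric.

Theorem mainTheorem8 (f : nat -> nat) (G : Group) (dG : G -> G -> R)
  (H : Group) (dH : H -> H -> R)
  (cG : countable G) (cH : countable H)
  (hG : proper_left_inv_metric G dG) (hH : proper_left_inv_metric H dH)
  (hf : growth_at_most dG f) :
  (forall A : G -> Prop, growth_at_most (sub_dist dG A) f) /\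
  ((exists phi : H -> G, coarse_embedding dH dG phi) -> growth_at_most dH f) /\
  (forall S : list G, generates G S ->
     forall beta : nat -> nat, ball_count G S beta ->
       fun_preceq beta f /\ growth_type dG beta).
Proof.
  split; [|split].
  - intros A. now apply growth_at_most_sub_dist.
  - intros [phi Hphi].
    exact (growth_at_most_coarse_embedding (proper_left_inv_metric_dist_self hG) hH Hphi hf).
  - intros S gen beta hbeta. split.
    + exact (fun_preceq_ball_count hG hbeta hf).
    + exact (growth_type_ball_count hG hbeta gen).
Qed.
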